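(* Let $G=(V,E)$ be a network as in the context, $\omega\ge1$ an integer, $t$ a sink node, and $\beta_t$ a nonnegative integer with $\beta_t\le C_t-\omega$. Then $$|\mathcal{A}_t(\beta_t)|\ge\binom{|\mathrm{In}(t)|}{\beta_t}.$$
   Context: Network: $G=(V,E)$ is a finite directed acyclic graph (parallel edges allowed) with a single source node $s$ and a set of sink nodes $T\subseteq V\setminus\{s\}$; $s$ has no incoming edges and sink nodes have no outgoing edges; $\mathrm{In}(t)$ is the set of incoming edges of $t$. A directed path is a sequence of edges $(e_1,\dots,e_m)$, $m\ge1$, with tail of $e_{k+1}$ equal to head of $e_k$. A cut separating node $v$ from node $u$ is a set of edges whose removal leaves no directed path from $u$ to $v$; $C_t$ is the minimum size of a cut separating sink $t$ from $s$. For $\xi\subseteq E$ and a node $u$, $A\subseteq E$ is a cut separating $u$ from $\xi$ if every directed path in $G$ whose first edge lies in $\xi$ and whose last edge has head $u$ contains an edge of $A$; $\mathrm{mincut}(\xi,u)$ is the minimum size of such a cut. A minimum cut separating $u$ from $\xi$ is primary if it separates $u$ from every minimum cut separating $u$ from $\xi$; it exists and is unique. $\xi$ is primary for $u$ if $\xi$ is the primary minimum cut separating $u$ from $\xi$. $\mathcal{A}_t(r)=\{\xi\subseteq E:|\xi|=r,\ \xi\text{ primary for }t\}$. *)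

From mathcomp Require Import all_boot.
Set Implicit Arguments. Unset Strict Implicit. Unset Printing Implicit Defensive.

(* A network: finite node type V, finite edge type E (parallel edges allowed);
   edge e goes from node [tl e] (tail) to node [hd e] (head). *)
Section Network.
Variables (V E : finType) (tl hd : E -> V).

Definition dpath (p : seq E) : bool :=
  if p is e :: p' then path (fun a b => hd a == tl b) e p' else false.

Definition acyclic : Prop :=
  forall (e : E) (p' : seq E), dpath (e :: p') -> hd (last e p') != tl e.

Definition In_edges (v : V) : {set E} := [set e | hd e == v].
Definition Out_edges (v : V) : {set E} := [set e | tl e == v].

Definition node_cut (u v : V) (A : {set E}) : Prop :=
  forall (e : E) (p' : seq E), dpath (e :: p') -> tl e = u -> hd (last e p') = v ->
    exists2 f, f \in e :: p' & f \in A.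

Definition is_min_cut_size (u v : V) (n : nat) : Prop :=
  (exists A, node_cut u v A /\ #|A| = n) /\
  (forall A, node_cut u v A -> n <= #|A|).

Definition edge_cut (xi : {set E}) (u : V) (A : {set E}) : Prop :=
  forall (e : E) (p' : seq E), dpath (e :: p') -> e \in xi -> hd (last e p') = u ->
    exists2 f, f \in e :: p' & f \in A.

Definition min_edge_cut (xi : {set E}) (u : V) (A : {set E}) : Prop :=
  edge_cut xi u A /\ (forall B, edge_cut xi u B -> #|A| <= #|B|).

Definition primary_min_cut (xi : {set E}) (u : V) (A : {set E}) : Prop :=
  min_edge_cut xi u A /\ (forall B, min_edge_cut xi u B -> edge_cut B u A).

Definition primary_for (xi : {set E}) (u : V) : Prop := primary_min_cut xi u xi.

End Network.

(* Every set xi of incoming edges of t is primary for t: each edge of xi is by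
   itself a directed path from xi to t, so every cut separating t from xi
   contains xi.  Hence xi is a minimum cut, and the only one, so it is primary.
   The beta-subsets of In(t) thus all lie in A_t(beta). *)
From mathcomp Require Import all_boot.
Set Implicit Arguments. Unset Strict Implicit.

Section IncomingEdgeSets.
Variables (V E : finType) (tl hd : E -> V).

Lemma edge_cut_refl (xi : {set E}) (u : V) : edge_cut tl hd xi u xi.
Proof. by move=> e p' _ xi_e _; exists e; rewrite ?mem_head. Qed.

Lemma edge_cut_In_subset (xi A : {set E}) (u : V) :
  xi \subset In_edges hd u -> edge_cut tl hd xi u A -> xi \subset A.
Proof.
move=> /subsetP xi_In cutA; apply/subsetP => e xi_e.
have /[!inE] /eqP hd_e := xi_In e xi_e.
by have [f /[!inE] /eqP ->] := cutA e [::] erefl xi_e hd_e.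
Qed.

Lemma min_edge_cut_In (xi : {set E}) (u : V) :
  xi \subset In_edges hd u -> min_edge_cut tl hd xi u xi.
Proof.
move=> xi_In; split; first exact: edge_cut_refl.
by move=> B cutB; apply/subset_leq_card; exact: edge_cut_In_subset xi_In cutB.
Qed.

Lemma primary_for_In (xi : {set E}) (u : V) :
  xi \subset In_edges hd u -> primary_for tl hd xi u.
Proof.
move=> xi_In; split; first exact: min_edge_cut_In.
move=> B [cutB minB].
have xiB := edge_cut_In_subset xi_In cutB.
have /eqP <- : xi == B by rewrite eqEcard xiB minB //; exact: edge_cut_refl.
exact: edge_cut_refl.
Qed.

End IncomingEdgeSets.

Theorem corollary15 (V E : finType) (tl hd : E -> V) (s : V) (T : {set V})
  (Hacyc : acyclic tl hd)
  (Hs_src : In_edges hd s = set0)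
  (HsT : s \notin T)
  (Hsinks : forall t, t \in T -> Out_edges tl t = set0)
  (omega : nat) (Homega : 1 <= omega)
  (t : V) (HtT : t \in T)
  (Ct : nat) (HCt : is_min_cut_size tl hd s t Ct)
  (beta : nat) (Hbeta : beta + omega <= Ct)
  (At : {set {set E}})
  (HAt : forall xi : {set E}, xi \in At <-> (#|xi| = beta /\ primary_for tl hd xi t)) :
  'C(#|In_edges hd t|, beta) <= #|At|.
Proof.
rewrite -(cards_draws (In_edges hd t) beta); apply/subset_leq_card/subsetP => xi.
rewrite inE => /andP[xi_In /eqP card_xi]; apply/HAt.
by split; last exact: primary_for_In.
Qed.
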